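(* Suppose there is $a\in\{0,1\}$, with $\neg a=1-a$, such that both of the following hold: (1) $E\{Z_i\mid A_i=a,Y_i=1\}<E\{Z_i\mid A_i=\neg a,Y_i=1\}$; (2) $E\{R_i\mid A_i=a,Y_i=1\}>E\{R_i\mid A_i=\neg a,Y_i=1\}$. Then there exists $\epsilon_o>0$ such that $\gamma(\epsilon_o)=0$, i.e. the exponential mechanism $\mathscr{A}_{\epsilon_o}$ is perfectly fair.
   Context: There are $n$ individuals indexed by $\mathcal{N}=\{1,\dots,n\}$. Individual $i$ is described by a random tuple $(X_i,A_i,Y_i)$, where $X_i\in\mathcal{X}$ are observable features, $A_i\in\{0,1\}$ is a protected attribute and $Y_i\in\{0,1\}$ is a hidden qualification state; the tuples $(X_i,A_i,Y_i)$, $i=1,\dots,n$, are i.i.d. with a common distribution $\mathsf{F}$ ($X_i$ may be correlated with $A_i$). A fixed function $r:\mathcal{X}\to\mathcal{R}$ is given, where $\mathcal{R}=\{\rho_1,\dots,\rho_{n'}\}\subset[0,1]$ is finite with $\rho_1=0$, $\rho_{n'}=1$; the qualification score of $i$ is $R_i=r(X_i)$. Conditioning events of the form $\{A_i=a,Y_i=1\}$ are assumed to have positive probability. For $\epsilon\ge 0$, the exponential mechanism $\mathscr{A}_\epsilon$, given realized scores $(r_1,\dots,r_n)$, selects individual $i$ with probability $\exp(\epsilon r_i/2)/\sum_{j=1}^n\exp(\epsilon r_j/2)$. Define the random variable $Z_{i,\epsilon}=\exp(\epsilon R_i/2)/\sum_{j=1}^n\exp(\epsilon R_j/2)$ (so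 $E\{Z_{i,\epsilon}\}$ is the probability that $\mathscr{A}_\epsilon$ selects $i$), and the fairness gap $\gamma(\epsilon)=E\{Z_{i,\epsilon}\mid A_i=0,Y_i=1\}-E\{Z_{i,\epsilon}\mid A_i=1,Y_i=1\}$ (independent of $i$). The mechanism is called perfectly fair when $\gamma(\epsilon)=0$. Let $N_{\max}=|\{i\in\mathcal{N}: R_i=\max_j R_j\}|$ and define $Z_i=0$ if $R_i\ne\max_j R_j$ and $Z_i=1/N_{\max}$ otherwise; $E\{Z_i\}$ is the probability that the non-private algorithm $\mathscr{A}$, which selects uniformly at random among the individuals with the highest score, selects $i$. *)

From HB Require Import structures.
From mathcomp Require Import all_boot all_order all_algebra.
From mathcomp Require Import all_classical all_reals all_analysis.
Set Implicit Arguments. Unset Strict Implicit. Unset Printing Implicit Defensive.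
Import Order.TTheory GRing.Theory Num.Theory.
Local Open Scope classical_set_scope.
Local Open Scope ring_scope.

Definition prob {d} {T : measurableType d} {R : realType}
  (P : probability T R) (E : set T) : R := fine (P E).

Definition cond_expect {d} {T : measurableType d} {R : realType}
  (P : probability T R) (f : T -> R) (E : set T) : R :=
  fine (\int[P]_(w in E) (f w)%:E) / prob P E.

Definition iid {d} {T : measurableType d} {R : realType} {dU}
  {U : measurableType dU} (n : nat) (P : probability T R) (V : 'I_n -> T -> U) : Prop :=
  (forall i j (B : set U), measurable B ->
      P (V i @^-1` B) = P (V j @^-1` B)) /\
  (forall B : 'I_n -> set U, (forall i, measurable (B i)) ->
      prob P (\bigcap_(i in [set: 'I_n]) (V i @^-1` B i))
      = \prod_(i < n) prob P (V i @^-1` B i)).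

(* Z_{i,eps}: selection probability of i by the exponential mechanism,
   given the realized scores RR. *)
Definition Zexp {R : realType} (n : nat) (eps : R) (RR : 'I_n -> R) (i : 'I_n) : R :=
  expR (eps * RR i / 2) / \sum_(j < n) expR (eps * RR j / 2).

(* Z_i: selection probability of i by the non-private algorithm (uniform
   among the maximisers of the score). *)
Definition Zmax {R : realType} (n : nat) (RR : 'I_n -> R) (i : 'I_n) : R :=
  let M := \big[Num.max/RR i]_(j < n) RR j in
  if RR i == M then (#|[set j | RR j == M]|%:R)^-1 else 0.

From HB Require Import structures.
From mathcomp Require Import all_boot all_order all_algebra.
From mathcomp Require Import all_classical all_reals all_analysis.
From mathcomp Require Import ring zify.
Import Order.TTheory GRing.Theory Num.Theory.
Import numFieldNormedType.Exports.
Local Open Scope classical_set_scope.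
Local Open Scope ring_scope.

(* Let c(t) be the difference between the conditional probabilities that the
   score profile (R_1, ..., R_n) equals t given (A_i, Y_i) = (a, 1) and given
   (A_i, Y_i) = (~a, 1); a gap of conditional expectations of any function h of
   the profile is then sum_t c(t) h(t).  Consider G(eps) = sum_t c(t) Z_{i,eps}(t),
   which is +-gamma(eps).  Since Z_{i,0} = 1/n and sum_t c(t) = 0, G(0) = 0.
   By independence the other scores R_j have the same conditional law in both
   groups, so G'(0) = (n - 1)/(2 n^2) sum_t c(t) t_i, which is positive by (2).
   As eps -> oo, Z_{i,eps} -> Z_i, so G tends to a negative limit by (1), and
   the intermediate value theorem yields a root eps > 0. *)

Section Calculus.
Context {R : realType}.

Lemma is_derive_sum_fin (T : finType) (h : T -> R -> R) (dh : T -> R) (x : R) :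
  (forall t, is_derive x 1 (h t) (dh t)) ->
  is_derive x 1 (fun e => \sum_t h t e) (\sum_t dh t).
Proof.
move=> dht; rewrite [X in is_derive _ _ X](_ : _ = \sum_t h t); last first.
  by apply/funext => e; rewrite fct_sumE.
by elim/big_ind2 : _ => // *; [exact: is_derive_cst | exact: is_deriveD].
Qed.

Lemma cvg_sum_fin (T : finType) (F : set_system R) (FF : Filter F)
    (f : T -> R -> R) (l : T -> R) :
  (forall t, f t x @[x --> F] --> l t) -> \sum_t f t x @[x --> F] --> \sum_t l t.
Proof. by move=> cf; apply: cvg_big => //; exact: add_continuous. Qed.

Lemma is_derive0_gt0_right (G : R -> R) (d : R) :
  is_derive (0 : R) (1 : R) G d -> 0 < d -> G 0 = 0 -> exists2 e, 0 < e & 0 < G e.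
Proof.
move=> /is_derive1_caratheodory [g [gE gc g0]] d0 G0.
have : \forall z \near (0:R), 0 < g z.
  by have := @cvgr_gt _ _ _ _ g (g 0) gc 0; rewrite g0; apply.
move=> /nbhs_ballP [e /= e0 He].
have e20 : 0 < e / 2 by rewrite divr_gt0.
exists (e / 2) => //.
have gpos : 0 < g (e / 2).
  apply: He; rewrite /ball /= sub0r normrN gtr0_norm //.
  by rewrite ltr_pdivrMr // ltr_pMr // ltr1n.
by have := gE (e / 2); rewrite G0 !subr0 => ->; rewrite mulr_gt0.
Qed.

End Calculus.

Section ExpMechanism.
Context {R : realType} {n : nat}.
Implicit Types (v : 'I_n -> R) (i : 'I_n).

Lemma expR_sum_gt0 v i (e : R) : 0 < \sum_j expR (e * v j / 2).
Proof.
rewrite (bigD1 i) //= ltr_pwDl ?expR_gt0 //.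
by apply: sumr_ge0 => j _; exact: expR_ge0.
Qed.

Lemma Zexp0 v i : Zexp 0 v i = n%:R^-1.
Proof.
rewrite /Zexp; under eq_bigr do rewrite !mul0r expR0.
by rewrite !mul0r expR0 sumr_const card_ord div1r.
Qed.

Lemma Zexp_shift v i (m e : R) : Zexp e (fun j => v j - m) i = Zexp e v i.
Proof.
have shift j : expR (e * (v j - m) / 2) = expR (e * v j / 2) * expR (- (e * m / 2)).
  by rewrite -expRD; congr expR; rewrite mulrBr mulrBl.
rewrite /Zexp; under eq_bigr do rewrite shift.
by rewrite shift -mulr_suml invfM mulrACA divff ?mulr1 // gt_eqF ?expR_gt0.
Qed.

Lemma cvg_expR_half_le0 (k : R) : k <= 0 ->
  expR (e * k / 2) @[e --> +oo] --> ((k == 0)%:R : R).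
Proof.
rewrite le_eqVlt => /predU1P [-> | k0].
  by rewrite eqxx; under eq_fun do rewrite mulr0 mul0r expR0; exact: cvg_cst.
rewrite lt_eqF // mulr0n.
have kpos : 0 < - k / 2 by rewrite divr_gt0 ?oppr_gt0.
have lin : e * (- k / 2) @[e --> +oo] --> +oo by apply: gt0_cvgMly => //; exact: cvg_id.
have -> : (fun e => expR (e * k / 2)) = (fun e => expR (- (e * (- k / 2)))).
  by apply/funext => e; rewrite mulNr mulrN opprK mulrA.
exact: (cvg_comp _ _ lin (@cvgr_expR R)).
Qed.

Lemma is_derive_expR_half (k x : R) :
  is_derive x 1 (fun e : R => expR (e * k / 2)) (expR (x * k / 2) * (k / 2)).
Proof.
have lin : is_derive x 1 (fun e : R => e * k / 2) (k / 2).
  have -> : (fun e : R => e * k / 2) = (k / 2) *: id.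
    by apply/funext => e /=; rewrite -mulrA mulrC.
  by apply: is_derive_eq; rewrite /GRing.scale /= mulr1.
exact: (is_derive1_comp (is_derive_expR _) lin).
Qed.

Lemma is_derive_Zexp v i (x : R) :
  is_derive x 1 (fun e => Zexp e v i)
    (Zexp x v i * (v i - \sum_j Zexp x v j * v j) / 2).
Proof.
have s0 := lt0r_neq0 (expR_sum_gt0 v i x).
have ds : is_derive x 1 (fun e => \sum_j expR (e * v j / 2))
    (\sum_j expR (x * v j / 2) * (v j / 2)).
  by apply: is_derive_sum_fin => j; exact: is_derive_expR_half.
move: (is_deriveM (is_derive_expR_half (v i) x) (is_deriveV s0 ds)).
move/is_derive_eq; apply; rewrite /Zexp.
set s := \sum_j expR (x * v j / 2).
have -> : \sum_j expR (x * v j / 2) / s * v j = (\sum_j expR (x * v j / 2) * v j) / s.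
  by rewrite mulr_suml; apply: eq_bigr => j _; rewrite mulrAC.
have -> : \sum_j expR (x * v j / 2) * (v j / 2) = (\sum_j expR (x * v j / 2) * v j) / 2.
  by rewrite mulr_suml; apply: eq_bigr => j _; rewrite mulrA.
by rewrite /GRing.scale /=; field; rewrite s0.
Qed.

Lemma cvg_Zexp_Zmax v i : Zexp e v i @[e --> +oo] --> Zmax v i.
Proof.
(* After shifting the scores by their maximum M, each exponential tends to the
   indicator of [v j = M]. *)
set M := \big[Num.max/v i]_j v j.
have vM j : v j <= M by exact: le_bigmax.
have [j0 Mj0] : exists j, M = v j.
  apply: (big_ind (fun m => exists j, m = v j)); first by exists i.
    by move=> _ _ [j ->] [k ->]; rewrite maxEle; case: ifP; [exists k | exists j].
  by move=> j _; exists j.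
have ind j : expR (e * (v j - M) / 2) @[e --> +oo] --> ((v j == M)%:R : R).
  by rewrite -subr_eq0; apply: cvg_expR_half_le0; rewrite subr_le0.
have maxers_gt0 : 0 < \sum_j ((v j == M)%:R : R).
  rewrite (bigD1 j0) //= -Mj0 eqxx ltr_pwDl //.
  by apply: sumr_ge0 => j _; exact: ler0n.
have -> : Zmax v i = (v i == M)%:R * (\sum_j ((v j == M)%:R : R))^-1.
  rewrite /Zmax -/M; case: eqP => _; last by rewrite mul0r.
  rewrite mul1r -natr_sum -sum1_card big_mkcond /=.
  by congr (_%:R^-1); apply: eq_bigr => j _; rewrite unfold_in /= asboolb; case: eqP.
under eq_cvg do rewrite -(Zexp_shift _ _ M) /Zexp.
apply: cvgM; first exact: ind.
by apply: cvgV (lt0r_neq0 maxers_gt0) _; exact: cvg_sum_fin.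
Qed.

Lemma Zmax_le1 v i : (n <= 1)%N -> Zmax v i = 1.
Proof.
move=> n_le1; have eq_i j : j = i by apply: ord_inj; move: (ltn_ord i) (ltn_ord j); lia.
rewrite /Zmax; set M := \big[Num.max/v i]_j v j.
have -> : M = v i.
  by apply: (big_ind (fun m => m = v i)) => // [_ _ -> ->|j _]; rewrite ?maxxx ?(eq_i j).
rewrite eqxx (@eq_card _ _ predT) ?card_ord; last first.
  by move=> j; rewrite unfold_in /= asboolb (eq_i j) eqxx.
suff -> : n = 1%N by rewrite invr1.
by move: (ltn_ord i); lia.
Qed.

Lemma is_derive0_Zexp v i :
  is_derive (0 : R) 1 (fun e => Zexp e v i)
    ((n%:R * v i - \sum_j v j) / (2 * n%:R ^+ 2)).
Proof.
have n_neq0 : n%:R != 0 :> R by rewrite pnatr_eq0 -lt0n; move: (ltn_ord i); lia.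
apply: (is_derive_eq (is_derive_Zexp v i 0)); rewrite Zexp0.
under eq_bigr do rewrite Zexp0.
by rewrite -mulr_sumr; field.
Qed.

Lemma weighted_score_gap {T : finType} (c : T -> R) (v : T -> 'I_n -> R) i :
  (forall j, j != i -> \sum_t c t * v t j = 0) ->
  \sum_t c t * (n%:R * v t i - \sum_j v t j) = (n%:R - 1) * \sum_t c t * v t i.
Proof.
move=> other0.
under eq_bigr do rewrite mulrBr mulr_sumr mulrCA.
rewrite sumrB -mulr_sumr exchange_big (bigD1 i) //=.
by rewrite [X in _ - (_ + X)]big1 ?addr0 ?mulrBl ?mul1r // => j; exact: other0.
Qed.

Lemma exists_root_weighted_Zexp {T : finType} (c : T -> R) (v : T -> 'I_n -> R) i :
  \sum_t c t = 0 ->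
  (forall j, j != i -> \sum_t c t * v t j = 0) ->
  0 < \sum_t c t * v t i ->
  \sum_t c t * Zmax (v t) i < 0 ->
  exists2 eps, 0 < eps & \sum_t c t * Zexp eps (v t) i = 0.
Proof.
move=> c0 other0 score_gt0 Gmax_lt0; pose G e := \sum_t c t * Zexp e (v t) i.
have n_gt1 : (1 < n)%N.
  rewrite ltnNge; apply/negP => n_le1; move: Gmax_lt0.
  by under eq_bigr do rewrite Zmax_le1 // mulr1; rewrite c0 ltxx.
have dG0_gt0 : 0 < \sum_t c t * (n%:R * v t i - \sum_j v t j).
  by rewrite weighted_score_gap // mulr_gt0 // subr_gt0 ltr1n.
have G_cont : continuous G.
  move=> x; apply/differentiable_continuous/derivable1_diffP.
  apply: (@ex_derive _ _ _ _ _ _ (\sum_t c t * _)).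
  by apply: is_derive_sum_fin => t; apply: is_deriveZ; exact: is_derive_Zexp.
have G0 : G 0 = 0.
  by rewrite /G; under eq_bigr do rewrite Zexp0; rewrite -mulr_suml c0 mul0r.
have n_gt0 : 0 < n%:R :> R by rewrite ltr0n; move: (ltn_ord i); lia.
have [e1 e1_gt0 Ge1_gt0] : exists2 e, 0 < e & 0 < G e.
  apply: is_derive0_gt0_right _ G0.
    by apply: is_derive_sum_fin => t; apply: is_deriveZ; exact: is_derive0_Zexp.
  rewrite (eq_bigr (fun t => c t * (n%:R * v t i - \sum_j v t j) / (2 * n%:R ^+ 2))).
    by rewrite -mulr_suml divr_gt0 // mulr_gt0 // exprn_gt0.
  by move=> t _; rewrite /GRing.scale /= mulrA.
have G_lim : G e @[e --> +oo] --> \sum_t c t * Zmax (v t) i.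
  by apply: cvg_sum_fin => t; apply: cvgMr; exact: cvg_Zexp_Zmax.
have [M [_ GM_lt0]] := cvgr_lt _ G_lim 0 Gmax_lt0.
pose e2 := Num.max e1 M + 1.
have M_lt_e2 : M < e2 by rewrite /e2 ltr_pwDr // le_max lexx orbT.
have [e e1e G_e] : exists2 e, e \in `[e1, e2] & G e = 0.
  apply: IVT; first by rewrite /e2 ler_wpDr // le_max lexx.
    by apply/continuous_subspaceT => x; exact: G_cont.
  by rewrite ge_min le_max (ltW Ge1_gt0) (ltW (GM_lt0 e2 M_lt_e2)) orbT.
exists e => //; move: e1e; rewrite in_itv /= => /andP [e1_le _].
exact: lt_le_trans e1_le.
Qed.

End ExpMechanism.

Section CondExpect.
Context {d : measure_display} {Omega : measurableType d} {R : realType}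
  (P : probability Omega R).

Definition cond_prob (F E : set Omega) : R := prob P (E `&` F) / prob P E.

Lemma sum_indic_preimage (T : finType) (S : Omega -> T) (h : T -> R) w :
  h (S w) = \sum_t h t * \1_(S @^-1` [set t]) w.
Proof.
rewrite (bigD1 (S w)) //= indicE mem_set // mulr1 big1 ?addr0 // => t tSw.
by rewrite indicE memNset ?mulr0 // => /= Swt; rewrite Swt eqxx in tSw.
Qed.

Lemma cond_expect_comp (T : finType) (S : Omega -> T) (h : T -> R) (E : set Omega) :
  measurable E -> (forall t, measurable (S @^-1` [set t])) ->
  cond_expect P (fun w => h (S w)) E = \sum_t h t * cond_prob (S @^-1` [set t]) E.
Proof.
move=> mE mS; under [RHS]eq_bigr do rewrite mulrA.
rewrite /cond_expect -mulr_suml; congr (_ / _).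
have intS t : P.-integrable E (fun w => (\1_(S @^-1` [set t]) w)%:E).
  by apply: (integrableS measurableT) => //; exact: integrable_indic.
under eq_integral do rewrite sum_indic_preimage -sumEFin.
under eq_integral do under eq_bigr do rewrite EFinM.
rewrite integral_sum //; last by move=> t; exact: integrableZl.
under eq_bigr => t _ do rewrite (integralZl mE (intS t)) (integral_indic _ mE (mS t)) setIC.
have PES_fin t : P (E `&` S @^-1` [set t]) \is a fin_num.
  by apply: fin_num_measure; exact: measurableI.
rewrite -sum_fine; last by move=> t _; apply: fin_numM (PES_fin t).
by apply: eq_bigr => t _; rewrite fineM // PES_fin.
Qed.

Lemma cond_expect1 (E : set Omega) : measurable E -> prob P E != 0 ->
  cond_expect P (fun _ => 1) E = 1.
Proof.
move=> mE PE0; rewrite /cond_expect.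
by rewrite (_ : (fun _ => 1%:E) = cst 1%:E) // integral_cst // mul1e divff.
Qed.

Lemma sum_cond_prob (T : finType) (S : Omega -> T) (E : set Omega) :
  measurable E -> (forall t, measurable (S @^-1` [set t])) -> prob P E != 0 ->
  \sum_t cond_prob (S @^-1` [set t]) E = 1.
Proof.
move=> mE mS PE0; rewrite -(cond_expect1 E mE PE0) (cond_expect_comp _ _ (fun=> 1) _ mE mS).
by under [RHS]eq_bigr do rewrite mul1r.
Qed.

End CondExpect.

Section Fairness.
Context {R : realType} {d : measure_display} {Omega : measurableType d}
  (P : probability Omega R) {dX : measure_display} {Xsp : measurableType dX}
  {n : nat} (X : 'I_n -> Omega -> Xsp) (A Y : 'I_n -> Omega -> bool)
  (r : Xsp -> R) (rho : seq R).
Hypotheses (mX : forall j, measurable_fun setT (X j))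
  (mA : forall j, measurable_fun setT (A j))
  (mY : forall j, measurable_fun setT (Y j))
  (iidXAY : iid P (fun j w => (X j w, A j w, Y j w)))
  (mr : measurable_fun setT r) (r_rho : forall x, r x \in rho).

Definition qualified i b := [set w | A i w = b /\ Y i w = true].

Definition score j w : seq_sub rho := SeqSub (r_rho (X j w)).

Definition profile w : {ffun 'I_n -> seq_sub rho} := [ffun j => score j w].

Definition scores (t : {ffun 'I_n -> seq_sub rho}) j : R := ssval (t j).

Lemma measurable_qualified i b : measurable (qualified i b).
Proof.
have mAi : measurable (setT `&` A i @^-1` [set b]) by exact: mA.
have mYi : measurable (setT `&` Y i @^-1` [set true]) by exact: mY.
by rewrite !setTI in mAi mYi; exact: measurableI.
Qed.

Lemma score_preimage j (x : seq_sub rho) :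
  score j @^-1` [set x] = X j @^-1` (r @^-1` [set ssval x]).
Proof. by apply/seteqP; split => w /=; [move=> <- | move=> rX; apply/val_inj]. Qed.

Lemma measurable_r_preimage (x : R) : measurable (r @^-1` [set x]).
Proof.
have : measurable (setT `&` r @^-1` [set x]) by apply: mr => //; exact: measurable_set1.
by rewrite setTI.
Qed.

Lemma measurable_score_preimage j (x : seq_sub rho) :
  measurable (score j @^-1` [set x]).
Proof.
have : measurable (setT `&` X j @^-1` (r @^-1` [set ssval x])).
  by apply: mX => //; exact: measurable_r_preimage.
by rewrite setTI score_preimage.
Qed.

Lemma measurable_profile_preimage t : measurable (profile @^-1` [set t]).
Proof.
have -> : profile @^-1` [set t] = \bigcap_(j in [set: 'I_n]) score j @^-1` [set t j].
  apply/seteqP; split => w /=; first by move=> <- j _; rewrite ffunE.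
  by move=> tw; apply/ffunP => j; rewrite ffunE; exact: tw.
apply: fin_bigcap_measurable; first exact: finite_finset.
by move=> j _; exact: measurable_score_preimage.
Qed.

Lemma prob_qualified_score i j b (x : seq_sub rho) : j != i ->
  prob P (qualified i b `&` score j @^-1` [set x]) =
  prob P (qualified i b) * prob P (score j @^-1` [set x]).
Proof.
move=> ji; have [_ prod_rule] := iidXAY; rewrite score_preimage.
pose B k : set (Xsp * bool * bool) :=
  if k == i then [set: Xsp] `*` [set b] `*` [set true]
  else if k == j then r @^-1` [set ssval x] `*` setT `*` setT else setT.
have mB k : measurable (B k).
  rewrite /B; case: ifP => _; first by apply: measurableX => //; exact: measurableX.
  case: ifP => _ //; apply: measurableX => //; apply: measurableX => //.
  exact: measurable_r_preimage.
have cap : \bigcap_(k in [set: 'I_n]) ((fun w => (X k w, A k w, Y k w)) @^-1` B k)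
    = qualified i b `&` X j @^-1` (r @^-1` [set ssval x]).
  apply/seteqP; split => w /=.
    move=> Bw; have := Bw j I; have := Bw i I.
    by rewrite /B eqxx (negPf ji) eqxx => -[[_ Aw] Yw] [[rX _] _].
  move=> [[Aw Yw] rX] k _; rewrite /B; case: eqP => [->|_] //=.
  by case: eqP => [->|_].
have := prod_rule B mB; rewrite cap => ->.
rewrite (bigD1 i) //= (bigD1 j) //= big1 ?mulr1; last first.
  move=> k /andP [ki kj]; rewrite /B (negPf ki) (negPf kj) preimage_setT.
  by rewrite /prob probability_setT.
rewrite /B eqxx (negPf ji) eqxx.
congr (prob P _ * prob P _); apply/seteqP; split => w /=.
- by case=> [[_ Aw] Yw].
- by case.
- by case=> [[-> _] _].
- by move=> ->.
Qed.

Variables (i : 'I_n) (a : bool).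
Hypothesis qualified_gt0 : forall b, 0 < prob P (qualified i b).

Definition gap_weight t :=
  cond_prob P (profile @^-1` [set t]) (qualified i a)
  - cond_prob P (profile @^-1` [set t]) (qualified i (~~ a)).

Lemma cond_expect_gap (F : ('I_n -> R) -> R) :
  cond_expect P (fun w => F (fun j => r (X j w))) (qualified i a)
  - cond_expect P (fun w => F (fun j => r (X j w))) (qualified i (~~ a))
  = \sum_t gap_weight t * F (scores t).
Proof.
have -> : (fun w => F (fun j => r (X j w))) = (fun w => F (scores (profile w))).
  by apply/funext => w; congr F; apply/funext => j; rewrite /scores ffunE.
rewrite !(cond_expect_comp P _ profile (fun t => F (scores t))).
- by rewrite -sumrB; apply: eq_bigr => t _; rewrite mulrBl !(mulrC (F _)).
all: exact: measurable_qualified || exact: measurable_profile_preimage.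
Qed.

Lemma sum_gap_weight : \sum_t gap_weight t = 0.
Proof.
rewrite sumrB !sum_cond_prob ?subrr ?lt0r_neq0 //.
all: exact: measurable_qualified || exact: measurable_profile_preimage.
Qed.

Lemma gap_weight_score j : j != i -> \sum_t gap_weight t * scores t j = 0.
Proof.
move=> ji; rewrite -(cond_expect_gap (fun v => v j)) /=.
suff indep b : cond_expect P (fun w => r (X j w)) (qualified i b)
    = \sum_x ssval x * prob P (score j @^-1` [set x]) by rewrite !indep subrr.
rewrite (cond_expect_comp P _ (score j) (@ssval _ rho)); last first.
- exact: measurable_score_preimage.
- exact: measurable_qualified.
apply: eq_bigr => x _; rewrite /cond_prob prob_qualified_score //.
by rewrite mulrAC divff ?mul1r // lt0r_neq0.
Qed.

End Fairness.

Theorem theorem1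
  (R : realType) (d : measure_display) (Omega : measurableType d)
  (P : probability Omega R)
  (dX : measure_display) (Xsp : measurableType dX)
  (n : nat) (X : 'I_n -> Omega -> Xsp) (A Y : 'I_n -> Omega -> bool)
  (r : Xsp -> R) (rho : seq R) :
  (* the features, attribute and qualification are random variables *)
  (forall j, measurable_fun setT (X j)) ->
  (forall j, measurable_fun setT (A j)) ->
  (forall j, measurable_fun setT (Y j)) ->
  (* the tuples (X_j, A_j, Y_j) are i.i.d. *)
  iid P (fun j w => (X j w, A j w, Y j w)) ->
  (* r is a (measurable) score function with finite range rho in [0,1],
     containing 0 and 1 *)
  measurable_fun setT r ->
  (forall x, r x \in rho) ->
  all (fun p => (0 <= p) && (p <= 1)) rho ->
  (0 : R) \in rho -> (1 : R) \in rho ->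
  (* conditioning events have positive probability *)
  (forall j (b : bool), 0 < prob P [set w | A j w = b /\ Y j w = true]) ->
  forall (i : 'I_n) (a : bool),
  (* (1) *)
  cond_expect P (fun w => Zmax (fun j => r (X j w)) i)
      [set w | A i w = a /\ Y i w = true]
  < cond_expect P (fun w => Zmax (fun j => r (X j w)) i)
      [set w | A i w = ~~ a /\ Y i w = true] ->
  (* (2) *)
  cond_expect P (fun w => r (X i w)) [set w | A i w = a /\ Y i w = true]
  > cond_expect P (fun w => r (X i w)) [set w | A i w = ~~ a /\ Y i w = true] ->
  exists eps : R, 0 < eps /\
    cond_expect P (fun w => Zexp eps (fun j => r (X j w)) i)
        [set w | A i w = false /\ Y i w = true]
    - cond_expect P (fun w => Zexp eps (fun j => r (X j w)) i)
        [set w | A i w = true /\ Y i w = true] = 0.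
Proof.
move=> mX mA mY iidXAY mr r_rho _ _ _ qualified_gt0 i a Zmax_gap score_gap.
have gap := cond_expect_gap P X A Y r rho mX mA mY mr r_rho i a.
set c := gap_weight P X A Y r rho r_rho i a in gap; set v := scores rho in gap.
have score_pos : 0 < \sum_t c t * v t i by rewrite -(gap (fun v => v i)) subr_gt0.
have Zmax_neg : \sum_t c t * Zmax (v t) i < 0.
  by rewrite -(gap (fun v => Zmax v i)) subr_lt0.
have [eps eps_gt0 root] := exists_root_weighted_Zexp c v i
  (sum_gap_weight P X A Y r rho mX mA mY mr r_rho i a (qualified_gt0 i))
  (gap_weight_score P X A Y r rho mX mA mY iidXAY mr r_rho i a (qualified_gt0 i))
  score_pos Zmax_neg.
exists eps; split => //.
pose Ze b := cond_expect P (fun w => Zexp eps (fun j => r (X j w)) i) (qualified A Y i b).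
have swap b : Ze b = Ze (~~ b) -> Ze false = Ze true by case: b => // ->.
have /swap : Ze a = Ze (~~ a) by apply/eqP; rewrite -subr_eq0 (gap (fun v => Zexp eps v i)) root.
by rewrite /Ze => ->; rewrite subrr.
Qed.
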